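(* Let $\alpha$ be a curve in $\mathbb{E}^n$ given by $\alpha(t)=\rho(t)y(t)$, where $\rho$ is an arbitrary positive function and $y$ is an arclength parameterized curve in the unit hypersphere $\mathbb{S}^{n-1}(1)=\{p\in\mathbb{E}^n:\langle p,p\rangle=1\}$. Then $\alpha$ is a rectifying curve (with respect to the origin, i.e. $\langle\alpha(t),N(t)\rangle=0$ for all $t$) if and only if $\rho(t)=\frac{a}{\cos(t+t_0)}$ for some $a\in\mathbb{R}\setminus\{0\}$ and $t_0\in\mathbb{R}$.
   Context: For a (regular, sufficiently differentiable) curve $\alpha$ in $\mathbb{E}^n$ with speed $v=\|\alpha'\|$, the Frenet frame $T,N,B_1,\dots,B_{n-2}$ is orthonormal with $T=\alpha'/v$ and satisfies $T'=v\kappa_1N$, $N'=v(-\kappa_1T+\kappa_2B_1)$, etc., with $\kappa_1>0$; in particular $N$ is the unit vector in the direction of $T'$. A curve $\alpha$ is a rectifying curve if the orthogonal complement of $N$ contains a fixed point at every parameter; here the fixed point is the origin, i.e. $\langle\alpha,N\rangle\equiv0$. *)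

From HB Require Import structures.
From mathcomp Require Import all_boot all_order all_algebra.
From mathcomp Require Import all_classical all_reals all_analysis.
Set Implicit Arguments. Unset Strict Implicit. Unset Printing Implicit Defensive.
Import Order.TTheory GRing.Theory Num.Theory.
Import numFieldNormedType.Exports.
Local Open Scope ring_scope.

Section Curves.
Variables (R : realType) (n : nat).

(* Euclidean inner product and Euclidean norm on E^n = 'rV[R]_n
   (the library's norm on matrices is the max norm, so we define these). *)
Definition dotv (u v : 'rV[R]_n) : R := (u *m v^T) 0 0.
Definition enorm (u : 'rV[R]_n) : R := Num.sqrt (dotv u u).

Definition tangent (alpha : R -> 'rV[R]_n) (t : R) : 'rV[R]_n :=
  (enorm (derive1 alpha t))^-1 *: derive1 alpha t.

Definition principal_normal (alpha : R -> 'rV[R]_n) (t : R) : 'rV[R]_n :=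
  (enorm (derive1 (tangent alpha) t))^-1 *: derive1 (tangent alpha) t.

Definition rectifying_on (I : interval R) (alpha : R -> 'rV[R]_n) : Prop :=
  forall t, t \in I -> dotv (alpha t) (principal_normal alpha t) = 0.

End Curves.

(* Write alpha = rho y with |y| = |y'| = 1.  Differentiating these identities gives
   <y, y'> = <y', y''> = 0 and <y, y''> = -1, and then the derivative of the unit
   tangent T = alpha' / v, where v = |alpha'| = sqrt (rho'^2 + rho^2), satisfies
     <alpha, T'> v^3 = rho^2 (rho rho'' - 2 rho'^2 - rho^2).
   So alpha is rectifying iff rho rho'' = 2 rho'^2 + rho^2.  For u = 1/rho this ODE
   reads u'' = -u, whose solutions on an interval are A cos t + B sin t = C cos (t + t0);
   positivity of rho forces C <> 0, and rho = C^-1 / cos (t + t0). *)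

From HB Require Import structures.
From mathcomp Require Import all_boot all_order all_algebra.
From mathcomp Require Import all_classical all_reals all_analysis.
From mathcomp Require Import ring lra.
Set Implicit Arguments. Unset Strict Implicit. Unset Printing Implicit Defensive.
Import Order.TTheory GRing.Theory Num.Theory.
Import numFieldNormedType.Exports.
Local Open Scope ring_scope.

Section InnerProduct.
Variables (R : realType) (n : nat).
Implicit Types u v w : 'rV[R]_n.

Lemma dotvE u w : dotv u w = \sum_(i < n) u 0 i * w 0 i.
Proof. by rewrite /dotv !mxE; apply: eq_bigr => i _; rewrite !mxE. Qed.

Lemma dotvC u w : dotv u w = dotv w u.
Proof. by rewrite !dotvE; apply: eq_bigr => i _; rewrite mulrC. Qed.

Lemma dotvDl u v w : dotv (u + v) w = dotv u w + dotv v w.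
Proof. by rewrite !dotvE -big_split; apply: eq_bigr => i _; rewrite !mxE mulrDl. Qed.

Lemma dotvDr u v w : dotv w (u + v) = dotv w u + dotv w v.
Proof. by rewrite ![dotv w _]dotvC dotvDl. Qed.

Lemma dotvZl (k : R) u w : dotv (k *: u) w = k * dotv u w.
Proof. by rewrite !dotvE mulr_sumr; apply: eq_bigr => i _; rewrite !mxE mulrA. Qed.

Lemma dotvZr (k : R) u w : dotv w (k *: u) = k * dotv w u.
Proof. by rewrite ![dotv w _]dotvC dotvZl. Qed.

Lemma dotv_ge0 u : 0 <= dotv u u.
Proof. by rewrite dotvE sumr_ge0 // => i _; rewrite -expr2 sqr_ge0. Qed.

Lemma dotv_gt0 u : u != 0 -> 0 < dotv u u.
Proof.
move=> u0; rewrite lt_def dotv_ge0 andbT dotvE psumr_eq0 => [|i _]; last first.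
  by rewrite -expr2 sqr_ge0.
apply: contra u0 => /allP u0; apply/eqP/matrixP => i j; rewrite (ord1 i) mxE.
by apply/eqP; move: (u0 j (mem_index_enum j)); rewrite mulf_eq0 orbb.
Qed.

Lemma enorm_sqr u : enorm u ^+ 2 = dotv u u.
Proof. by rewrite /enorm sqr_sqrtr // dotv_ge0. Qed.

End InnerProduct.

Section Derivatives.
Variable R : realType.

Lemma scalerE (x y : R) : x *: y = x * y.
Proof. by []. Qed.

Lemma derive1_val (V : normedModType R) (f : R -> V) (t : R) (df : V) :
  is_derive t 1 f df -> derive1 f t = df.
Proof. by move=> Df; rewrite derive1E; exact: derive_val. Qed.

Lemma is_derive_unique (f : R -> R) (t d1 d2 : R) :
  is_derive t 1 f d1 -> is_derive t 1 f d2 -> d1 = d2.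
Proof. by move=> D1 D2; rewrite -(derive1_val D1) (derive1_val D2). Qed.

Lemma near_itvoo (P : R -> Prop) (a b t : R) :
  {in `]a, b[, forall s, P s} -> t \in `]a, b[ -> \forall s \near t, P s.
Proof. by move=> HP tI; apply: filterS (near_in_itvoo tI). Qed.

Lemma is_derive_derive1 (V : normedModType R) (f : R -> V) (t : R) :
  derivable f t 1 -> is_derive t 1 f (derive1 f t).
Proof. by rewrite derive1E; apply: derivableP. Qed.

Lemma is_deriveZfun (p q : nat) (f : R -> R) (g : R -> 'M[R]_(p, q))
    (t df : R) (dg : 'M[R]_(p, q)) :
  is_derive t 1 f df -> is_derive t 1 g dg ->
  is_derive t 1 (fun s => f s *: g s) (df *: g t + f t *: dg).
Proof.
move=> Df [Dg <-].
have Dfg i j : is_derive t 1 (fun s => (f s *: g s) i j)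
    (f t *: 'D_1 (fun s => g s i j) t + g t i j *: df).
  have -> : (fun s => (f s *: g s) i j) = f * (fun s => g s i j).
    by apply/funext => s; rewrite mxE.
  apply: is_deriveM; apply: derivableP.
  exact: (derivable_mxP _ _ _).1 Dg i j.
have dfg : derivable (fun s => f s *: g s) t 1.
  by apply/derivable_mxP => i j; case: (Dfg i j).
apply: DeriveDef => //; rewrite (derive_mx dfg) (derive_mx Dg).
apply/matrixP => i j; rewrite !mxE; have [_ ->] := Dfg i j.
by rewrite addrC [_ *: df]mulrC.
Qed.

Lemma is_derive_dotv (n : nat) (f g : R -> 'rV[R]_n) (t : R) (df dg : 'rV[R]_n) :
  is_derive t 1 f df -> is_derive t 1 g dg ->
  is_derive t 1 (fun s => dotv (f s) (g s)) (dotv df (g t) + dotv (f t) dg).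
Proof.
move=> [Df <-] [Dg <-].
have entry (h : R -> 'rV[R]_n) i : derivable h t 1 ->
    is_derive t 1 (fun s => h s 0 i) ('D_1 h t 0 i).
  move=> Dh; apply: DeriveDef; first exact: (derivable_mxP _ _ _).1 Dh 0 i.
  by rewrite (derive_mx Dh) mxE.
have -> : (fun s => dotv (f s) (g s)) = \sum_(i < n) (fun s => f s 0 i * g s 0 i).
  by apply/funext => s; rewrite dotvE fct_sumE.
have Dfg i : is_derive t 1 (fun s => f s 0 i * g s 0 i)
    ('D_1 f t 0 i * g t 0 i + f t 0 i * 'D_1 g t 0 i).
  apply: (is_derive_eq (is_deriveM (entry f i Df) (entry g i Dg))).
  by rewrite addrC [_ *: 'D_1 f t 0 i]mulrC.
apply: (is_derive_eq (is_derive_sum Dfg)).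
by rewrite !dotvE -big_split.
Qed.

Lemma dotv_near_cst_derive0 (n : nat) (f g : R -> 'rV[R]_n) (t c : R)
    (df dg : 'rV[R]_n) :
  (\forall s \near t, dotv (f s) (g s) = c) ->
  is_derive t 1 f df -> is_derive t 1 g dg ->
  dotv df (g t) + dotv (f t) dg = 0.
Proof.
move=> fgc Df Dg; apply: (is_derive_unique _ (is_derive_cst c t 1)).
exact: (near_eq_is_derive (g := cst c) fgc (is_derive_dotv Df Dg)).
Qed.

Lemma is_derive0_itvoo_cst (f : R -> R) (a b : R) :
  (forall x, x \in `]a, b[ -> is_derive x 1 f 0) ->
  {in `]a, b[ &, forall x y, f x = f y}.
Proof.
move=> f0 x y xI yI.
wlog xy : x y xI yI / x <= y => [hw|].
  by have [xy|/ltW yx] := leP x y; [exact: hw | exact/esym/hw].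
have xyI z : z \in `[x, y] -> z \in `]a, b[.
  move: xI yI; rewrite !in_itv /= => /andP[ax _] /andP[_ yb] /andP[xz zy].
  by apply/andP; split; lra.
have f0xy z : z \in `]x, y[ -> is_derive z 1 f ((fun=> 0 : R) z).
  by move=> zI; apply: f0; apply: xyI; exact: subset_itv_oo_cc.
have [|c _] := MVT_segment xy f0xy.
  by apply: derivable_within_continuous => z zI; case: (f0 z (xyI z zI)).
by rewrite mul0r => /eqP; rewrite subr_eq0 => /eqP.
Qed.

End Derivatives.

Section UnitTangent.
Variables (R : realType) (n : nat) (alpha : R -> 'rV[R]_n) (t : R).
Hypotheses (dalpha' : derivable (derive1 alpha) t 1) (alpha'0 : derive1 alpha t != 0).

Lemma derive1_tangent :
  derive1 (tangent alpha) t =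
  (enorm (derive1 alpha t))^-1 *: derive1 (derive1 alpha) t
  - (dotv (derive1 alpha t) (derive1 (derive1 alpha) t) / enorm (derive1 alpha t) ^+ 3)
    *: derive1 alpha t.
Proof.
set A := derive1 alpha; set A' := derive1 A t; set v := enorm (A t).
have DA : is_derive t 1 A A' := is_derive_derive1 dalpha'.
have DV : is_derive t 1 (fun s => enorm (A s))
    ((2 * v)^-1 * (dotv A' (A t) + dotv (A t) A')).
  exact: is_derive1_comp (is_derive1_sqrt (dotv_gt0 alpha'0)) (is_derive_dotv DA DA).
have v0 : v != 0 by rewrite gt_eqF // sqrtr_gt0 dotv_gt0.
have DVinv := is_deriveV (f := fun s => enorm (A s)) v0 DV.
rewrite (derive1_val (is_deriveZfun DVinv DA)) addrC -scaleNr.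
congr (_ + _); congr (_ *: _); rewrite [dotv A' _]dotvC.
by rewrite scalerE -/v; field.
Qed.

Lemma dotv_derive1_tangent (x : 'rV[R]_n) :
  dotv x (derive1 (tangent alpha) t) * enorm (derive1 alpha t) ^+ 3 =
  dotv x (derive1 (derive1 alpha) t) * dotv (derive1 alpha t) (derive1 alpha t)
  - dotv x (derive1 alpha t) * dotv (derive1 alpha t) (derive1 (derive1 alpha) t).
Proof.
have v0 : enorm (derive1 alpha t) != 0 by rewrite gt_eqF // sqrtr_gt0 dotv_gt0.
rewrite derive1_tangent -scaleNr dotvDr !dotvZr -enorm_sqr.
by field.
Qed.

End UnitTangent.

Section SphericalCurve.
Variables (R : realType) (n : nat) (a b : R) (y : R -> 'rV[R]_n).
Hypothesis y_derivable2 :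
  forall t, t \in `]a, b[ -> derivable y t 1 /\ derivable (derive1 y) t 1.
Hypothesis y_unit : forall t, t \in `]a, b[ -> dotv (y t) (y t) = 1.
Hypothesis y'_unit : forall t, t \in `]a, b[ -> enorm (derive1 y t) = 1.

Local Notation y' := (derive1 y).
Local Notation y'' := (derive1 (derive1 y)).

Let Dy t : t \in `]a, b[ -> is_derive t 1 y (y' t).
Proof. by case/y_derivable2 => /is_derive_derive1. Qed.

Let Dy' t : t \in `]a, b[ -> is_derive t 1 y' (y'' t).
Proof. by case/y_derivable2 => _ /is_derive_derive1. Qed.

Lemma sphere_dotv_yy' t : t \in `]a, b[ -> dotv (y t) (y' t) = 0.
Proof.
move=> tI; have := dotv_near_cst_derive0 (near_itvoo y_unit tI) (Dy tI) (Dy tI).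
by rewrite dotvC -mulr2n => /eqP; rewrite mulrn_eq0 => /eqP.
Qed.

Lemma sphere_dotv_y'y'' t : t \in `]a, b[ -> dotv (y' t) (y'' t) = 0.
Proof.
have y'_unit2 s : s \in `]a, b[ -> dotv (y' s) (y' s) = 1.
  by move=> sI; rewrite -enorm_sqr y'_unit // expr1n.
move=> tI; have := dotv_near_cst_derive0 (near_itvoo y'_unit2 tI) (Dy' tI) (Dy' tI).
by rewrite dotvC -mulr2n => /eqP; rewrite mulrn_eq0 => /eqP.
Qed.

Lemma sphere_dotv_yy'' t : t \in `]a, b[ -> dotv (y t) (y'' t) = -1.
Proof.
move=> tI.
have := dotv_near_cst_derive0 (near_itvoo sphere_dotv_yy' tI) (Dy tI) (Dy' tI).
by rewrite -enorm_sqr y'_unit // expr1n => /eqP; rewrite addrC addr_eq0 => /eqP.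
Qed.

End SphericalCurve.

Section RadialCurve.
Variables (R : realType) (n : nat) (a b : R) (rho : R -> R) (y : R -> 'rV[R]_n).
Hypothesis rho_gt0 : forall t, t \in `]a, b[ -> 0 < rho t.
Hypothesis rho_derivable2 :
  forall t, t \in `]a, b[ -> derivable rho t 1 /\ derivable (derive1 rho) t 1.
Hypothesis y_derivable2 :
  forall t, t \in `]a, b[ -> derivable y t 1 /\ derivable (derive1 y) t 1.
Hypothesis y_unit : forall t, t \in `]a, b[ -> dotv (y t) (y t) = 1.
Hypothesis y'_unit : forall t, t \in `]a, b[ -> enorm (derive1 y t) = 1.

Local Notation alpha := (fun s => rho s *: y s).
Local Notation rho' := (derive1 rho).
Local Notation rho'' := (derive1 (derive1 rho)).
Local Notation y' := (derive1 y).
Local Notation y'' := (derive1 (derive1 y)).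
Local Notation alpha' := (derive1 alpha).

Let yy' t : t \in `]a, b[ -> dotv (y t) (y' t) = 0.
Proof. exact: sphere_dotv_yy' y_derivable2 y_unit t. Qed.

Let y'y'' t : t \in `]a, b[ -> dotv (y' t) (y'' t) = 0.
Proof. exact: sphere_dotv_y'y'' y_derivable2 y'_unit t. Qed.

Let yy'' t : t \in `]a, b[ -> dotv (y t) (y'' t) = -1.
Proof. exact: sphere_dotv_yy'' y_derivable2 y_unit y'_unit t. Qed.

Let Drho t : t \in `]a, b[ -> is_derive t 1 rho (rho' t).
Proof. by case/rho_derivable2 => /is_derive_derive1. Qed.

Let Drho' t : t \in `]a, b[ -> is_derive t 1 rho' (rho'' t).
Proof. by case/rho_derivable2 => _ /is_derive_derive1. Qed.

Let Dy t : t \in `]a, b[ -> is_derive t 1 y (y' t).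
Proof. by case/y_derivable2 => /is_derive_derive1. Qed.

Let Dy' t : t \in `]a, b[ -> is_derive t 1 y' (y'' t).
Proof. by case/y_derivable2 => _ /is_derive_derive1. Qed.

Lemma derive1_radial t : t \in `]a, b[ -> alpha' t = rho' t *: y t + rho t *: y' t.
Proof. by move=> tI; apply/derive1_val/is_deriveZfun; [exact: Drho | exact: Dy]. Qed.

Lemma is_derive_derive1_radial t : t \in `]a, b[ ->
  is_derive t 1 alpha'
    ((rho'' t *: y t + rho' t *: y' t) + (rho' t *: y' t + rho t *: y'' t)).
Proof.
move=> tI; have alpha'E := near_itvoo (fun s sI => esym (derive1_radial sI)) tI.
apply: near_eq_is_derive alpha'E _.
by apply: is_deriveD; apply: is_deriveZfun; auto.
Qed.

Lemma dotv_radial' t : t \in `]a, b[ ->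
  dotv (alpha' t) (alpha' t) = rho' t ^+ 2 + rho t ^+ 2.
Proof.
move=> tI; rewrite derive1_radial // !(dotvDl, dotvDr, dotvZl, dotvZr).
rewrite [dotv (y' t) (y t)]dotvC yy' // y_unit // -enorm_sqr y'_unit //.
by rewrite expr1n; ring.
Qed.

Let dotv_radial'_gt0 t : t \in `]a, b[ -> 0 < dotv (alpha' t) (alpha' t).
Proof. by move=> tI; rewrite dotv_radial' // ltr_wpDl ?sqr_ge0 ?exprn_gt0 ?rho_gt0. Qed.

Lemma radial_dotv_derive1_tangent t : t \in `]a, b[ ->
  dotv (alpha t) (derive1 (tangent alpha) t) * enorm (alpha' t) ^+ 3 =
  rho t ^+ 2 * (rho t * rho'' t - 2 * rho' t ^+ 2 - rho t ^+ 2).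
Proof.
move=> tI; have D2 := is_derive_derive1_radial tI.
have alpha'0 : alpha' t != 0.
  apply: contraTneq (dotv_radial'_gt0 tI) => ->.
  by rewrite dotvE big1 ?ltxx // => i _; rewrite mxE mul0r.
have dalpha' : derivable alpha' t 1 by case: D2.
rewrite dotv_derive1_tangent //.
rewrite (derive1_val D2) dotv_radial' // derive1_radial //.
rewrite !(dotvDl, dotvDr, dotvZl, dotvZr) [dotv (y' t) (y t)]dotvC.
rewrite yy' // y'y'' // yy'' // y_unit // -enorm_sqr y'_unit //.
by rewrite expr1n; ring.
Qed.

Lemma radial_rectifying_at t : t \in `]a, b[ -> derive1 (tangent alpha) t != 0 ->
  dotv (alpha t) (principal_normal alpha t) = 0 <->
  rho t * rho'' t = 2 * rho' t ^+ 2 + rho t ^+ 2.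
Proof.
move=> tI T'0; have key := radial_dotv_derive1_tangent tI.
have v_gt0 : 0 < enorm (alpha' t) by rewrite sqrtr_gt0 dotv_radial'_gt0.
have k0 : enorm (derive1 (tangent alpha) t) != 0.
  by apply: lt0r_neq0; rewrite sqrtr_gt0; exact: dotv_gt0.
rewrite /principal_normal dotvZr; split => [/eqP | ode].
  rewrite mulf_eq0 invr_eq0 (negbTE k0) /= => /eqP d0.
  move: key; rewrite d0 mul0r => /esym/eqP.
  by rewrite mulf_eq0 sqrf_eq0 gt_eqF ?rho_gt0 //= -addrA -opprD subr_eq0 => /eqP.
have : dotv (alpha t) (derive1 (tangent alpha) t) * enorm (alpha' t) ^+ 3 = 0.
  by rewrite key ode -addrA -opprD subrr mulr0.
by move/eqP; rewrite mulf_eq0 expf_eq0 /= (gt_eqF v_gt0) orbF => /eqP ->; rewrite mulr0.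
Qed.

End RadialCurve.

Section Trigonometry.
Variable R : realType.

Lemma is_derive_shift (t0 s : R) : is_derive s 1 (fun s => s + t0) 1.
Proof.
by apply: (is_derive_eq (is_deriveD (is_derive_id s 1) (is_derive_cst t0 s 1))); rewrite addr0.
Qed.

Lemma is_derive_cos_shift (t0 s : R) :
  is_derive s 1 (fun s => cos (s + t0)) (- sin (s + t0)).
Proof.
have D := @is_derive1_comp _ cos (fun r => r + t0) _ _ _
  (is_derive_cos (s + t0)) (is_derive_shift t0 s).
by apply: (is_derive_eq D); rewrite mulr1.
Qed.

Lemma is_derive_sin_shift (t0 s : R) :
  is_derive s 1 (fun s => sin (s + t0)) (cos (s + t0)).
Proof.
have D := @is_derive1_comp _ sin (fun r => r + t0) _ _ _
  (is_derive_sin (s + t0)) (is_derive_shift t0 s).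
by apply: (is_derive_eq D); rewrite mulr1.
Qed.

Lemma cos_sin_surj (c s : R) : c ^+ 2 + s ^+ 2 = 1 -> exists t, cos t = c /\ sin t = s.
Proof.
move=> cs1.
have c_itv : -1 <= c <= 1.
  rewrite -ler_norml -(@ler_pXn2r _ 2) ?nnegrE ?normr_ge0 //.
  by rewrite real_normK ?num_real // expr1n -cs1 lerDl sqr_ge0.
have sin_acos_c : sin (acos c) = `|s|.
  by rewrite sin_acos // -cs1 addrAC subrr add0r sqrtr_sqr.
have [s0|s0] := leP 0 s.
  by exists (acos c); rewrite acosK ?in_itv // sin_acos_c ger0_norm.
by exists (- acos c); rewrite cosN sinN acosK ?in_itv // sin_acos_c ltr0_norm ?opprK.
Qed.

Lemma cos_sin_phase (A B : R) :
  exists C t0 : R, forall t, A * cos t + B * sin t = C * cos (t + t0).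
Proof.
have [AB0|AB0] := eqVneq (A ^+ 2 + B ^+ 2) 0.
  exists 0, 0 => t; move/eqP: AB0; rewrite paddr_eq0 ?sqr_ge0 // !sqrf_eq0.
  by case/andP => /eqP-> /eqP->; rewrite !mul0r addr0.
pose C := Num.sqrt (A ^+ 2 + B ^+ 2).
have C0 : C != 0 by rewrite sqrtr_eq0 -ltNge lt_def AB0 addr_ge0 ?sqr_ge0.
have C2 : C ^+ 2 = A ^+ 2 + B ^+ 2 by rewrite sqr_sqrtr // addr_ge0 ?sqr_ge0.
have [t0 [ct0 st0]] : exists t0, cos t0 = A / C /\ sin t0 = - (B / C).
  apply: cos_sin_surj; rewrite sqrrN !expr_div_n C2.
  by field.
exists C, t0 => t; rewrite cosD ct0 st0.
by field.
Qed.

End Trigonometry.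

Lemma harmonic_solution (R : realType) (a b : R) (u w : R -> R) : a < b ->
  (forall t, t \in `]a, b[ -> is_derive t 1 u (w t)) ->
  (forall t, t \in `]a, b[ -> is_derive t 1 w (- u t)) ->
  exists A B : R, forall t, t \in `]a, b[ -> u t = A * cos t + B * sin t.
Proof.
move=> ab Du Dw.
pose h1 s := u s * cos s - w s * sin s.
pose h2 s := u s * sin s + w s * cos s.
have Dh1 s : s \in `]a, b[ -> is_derive s 1 h1 0.
  move=> sI; apply: (is_derive_eq (is_deriveB (is_deriveM (Du s sI) (is_derive_cos s))
                                             (is_deriveM (Dw s sI) (is_derive_sin s)))).
  by rewrite !scalerE; ring.
have Dh2 s : s \in `]a, b[ -> is_derive s 1 h2 0.
  move=> sI; apply: (is_derive_eq (is_deriveD (is_deriveM (Du s sI) (is_derive_sin s))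
                                             (is_deriveM (Dw s sI) (is_derive_cos s)))).
  by rewrite !scalerE; ring.
have mI := mid_in_itvoo ab.
exists (h1 ((a + b) / 2)), (h2 ((a + b) / 2)) => t tI.
rewrite -(is_derive0_itvoo_cst Dh1 tI mI) -(is_derive0_itvoo_cst Dh2 tI mI) /h1 /h2.
by rewrite -[LHS]mul1r -(cos2Dsin2 t); ring.
Qed.

Section ReciprocalOde.
Variables (R : realType) (a b : R) (rho : R -> R).
Hypothesis rho_gt0 : forall t, t \in `]a, b[ -> 0 < rho t.
Hypothesis rho_derivable2 :
  forall t, t \in `]a, b[ -> derivable rho t 1 /\ derivable (derive1 rho) t 1.

Local Notation rho' := (derive1 rho).
Local Notation rho'' := (derive1 (derive1 rho)).
Local Notation ode t := (rho t * rho'' t = 2 * rho' t ^+ 2 + rho t ^+ 2).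

Let u s := (rho s)^-1.
(* [u'] written through [rho'], so that [u'' = -u] needs no second derivative of [u]. *)
Let w s := - (rho' s * (u s * u s)).

Let rho_neq0 t : t \in `]a, b[ -> rho t != 0.
Proof. by move/rho_gt0/lt0r_neq0. Qed.

Let Du t : t \in `]a, b[ -> is_derive t 1 u (w t).
Proof.
move=> tI; case: (rho_derivable2 tI) => /is_derive_derive1 Drho _.
apply: (is_derive_eq (is_deriveV (rho_neq0 tI) Drho)).
by rewrite scalerE /w /u; field; rewrite rho_neq0.
Qed.

Let Dw t : t \in `]a, b[ ->
  is_derive t 1 w ((2 * rho' t ^+ 2 - rho t * rho'' t) / rho t ^+ 3).
Proof.
move=> tI; case: (rho_derivable2 tI) => _ /is_derive_derive1 Drho'.
apply: (is_derive_eq (is_deriveN (is_deriveM Drho' (is_deriveM (Du tI) (Du tI))))).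
by rewrite !scalerE /w /u !fctE; field; rewrite rho_neq0.
Qed.

Let ode_iff t : t \in `]a, b[ ->
  ode t <-> (2 * rho' t ^+ 2 - rho t * rho'' t) / rho t ^+ 3 = - u t.
Proof.
move=> tI; have r0 := rho_neq0 tI; rewrite /u; split => [-> | e].
  by field.
have : 2 * rho' t ^+ 2 - rho t * rho'' t = - rho t ^+ 2.
  by rewrite -[LHS](divfK (expf_neq0 3 r0)) e; field.
lra.
Qed.

Lemma rectifying_ode_solution : a < b -> (forall t, t \in `]a, b[ -> ode t) ->
  exists c t0 : R, c != 0 /\ forall t, t \in `]a, b[ -> rho t = c / cos (t + t0).
Proof.
move=> ab ode_rho.
have Dw' t : t \in `]a, b[ -> is_derive t 1 w (- u t).
  by move=> tI; rewrite -((ode_iff tI).1 (ode_rho t tI)); exact: Dw.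
have [A [B uAB]] := harmonic_solution ab Du Dw'.
have [C [t0 ABC]] := cos_sin_phase A B.
have uC t : t \in `]a, b[ -> u t = C * cos (t + t0) by move=> tI; rewrite uAB.
have C0 : C != 0.
  have mI := mid_in_itvoo ab; apply: contraTneq (rho_gt0 mI) => C0.
  by rewrite -[rho _]invrK -/(u _) uC // C0 mul0r invr0 ltxx.
exists C^-1, t0; split; first by rewrite invr_eq0.
by move=> t tI; rewrite -[rho t]invrK -/(u t) uC // invfM.
Qed.

Lemma rectifying_ode_of_solution (c t0 : R) : c != 0 ->
  (forall t, t \in `]a, b[ -> rho t = c / cos (t + t0)) ->
  forall t, t \in `]a, b[ -> ode t.
Proof.
move=> c0 rho_sol t tI.
have u_sol s : s \in `]a, b[ -> u s = c^-1 * cos (s + t0).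
  by move=> sI; rewrite /u rho_sol // invfM invrK.
have w_sol s : s \in `]a, b[ -> w s = c^-1 * - sin (s + t0).
  move=> sI; apply: is_derive_unique (Du sI) _.
  apply: near_eq_is_derive (near_itvoo (fun r rI => esym (u_sol r rI)) sI) _.
  exact: is_deriveZ (is_derive_cos_shift t0 s).
apply/(ode_iff tI); apply: is_derive_unique (Dw tI) _.
apply: near_eq_is_derive (near_itvoo (fun r rI => esym (w_sol r rI)) tI) _.
apply: (is_derive_eq (is_deriveZ c^-1 (is_deriveN (is_derive_sin_shift t0 t)))).
by rewrite u_sol // scalerE mulrN.
Qed.

End ReciprocalOde.

Theorem theorem4p5 (R : realType) (n : nat) (t1 t2 : R)
  (rho : R -> R) (y : R -> 'rV[R]_n) :
  (2 <= n)%N -> t1 < t2 ->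
  (* rho positive, twice differentiable *)
  (forall t, t \in `]t1, t2[ -> 0 < rho t) ->
  (forall t, t \in `]t1, t2[ -> derivable rho t 1 /\ derivable (derive1 rho) t 1) ->
  (* y twice differentiable, in the unit hypersphere, arclength parameterized *)
  (forall t, t \in `]t1, t2[ -> derivable y t 1 /\ derivable (derive1 y) t 1) ->
  (forall t, t \in `]t1, t2[ -> dotv (y t) (y t) = 1) ->
  (forall t, t \in `]t1, t2[ -> enorm (derive1 y t) = 1) ->
  (* Frenet frame exists: kappa_1 > 0, i.e. T' never vanishes *)
  (forall t, t \in `]t1, t2[ ->
     derive1 (tangent (fun s => rho s *: y s)) t != 0) ->
  rectifying_on `]t1, t2[ (fun s => rho s *: y s) <->
  exists a t0 : R, a != 0 /\
    forall t, t \in `]t1, t2[ -> rho t = a / cos (t + t0).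
Proof.
move=> _ t12 rho_gt0 rho_d2 y_d2 y_unit y'_unit T'0.
have rectifying_iff_ode t (tI : t \in `]t1, t2[) :=
  radial_rectifying_at rho_gt0 rho_d2 y_d2 y_unit y'_unit tI (T'0 t tI).
split => [rect | [a [t0 [a0 rho_sol]]] t tI].
  by apply: rectifying_ode_solution => // t tI; apply/(rectifying_iff_ode t tI)/rect.
by apply/(rectifying_iff_ode t tI); exact: rectifying_ode_of_solution a0 rho_sol t tI.
Qed.
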